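(* Let $G$ be a connected undirected graph without self-loops on $n$ vertices with degrees $d_i$ and Laplacian $L$, $C=\mathrm{diag}(c_1,\dots,c_n)$ with positive rationals $c_i$ of $O(\log n)$ bits and $c_id_i<1$, $P=I_n-CL$, $\pi=(\mathrm{tr}\,C^{-1})^{-1}C^{-1}\mathbf{1}$, and $\Gamma=\lim_{t\to\infty}\bigl(-\mathbf{1}\pi^Tt+\sum_{s=0}^{t-1}P^s\bigr)$. Then $(I_n-P\,|\,\mathbf{1})$ is invertible and $\Gamma=(I_n-\mathbf{1}\pi^T\,|\,\mathbf{0})\,(I_n-P\,|\,\mathbf{1})^{-1}$.
   Context: For an $n\times n$ matrix $Y$ and $y\in\mathbb{R}^n$, $(Y\,|\,y)$ denotes the matrix obtained from $Y$ by replacing its last column with $y$. $\mathbf{1}$ is the all-ones vector and $\mathbf{0}$ the zero vector. *)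

From HB Require Import structures.
From mathcomp Require Import all_boot all_order all_algebra.
From mathcomp Require Import all_classical all_reals all_analysis.
Set Implicit Arguments. Unset Strict Implicit. Unset Printing Implicit Defensive.
Import Order.TTheory GRing.Theory Num.Theory.
Local Open Scope ring_scope.

Definition simple_graph (n : nat) (e : rel 'I_n) : Prop :=
  symmetric e /\ irreflexive e.

Definition graph_connected (n : nat) (e : rel 'I_n) : Prop :=
  forall i j : 'I_n, connect e i j.

Definition deg (n : nat) (e : rel 'I_n) (i : 'I_n) : nat := #|[set j | e i j]|.

Definition laplacian (R : ringType) (n : nat) (e : rel 'I_n) : 'M[R]_n :=
  \matrix_(i, j) ((deg e i)%:R *+ (i == j) - (e i j)%:R).

(* (Y | y): Y with its last column (index n-1) replaced by y *)
Definition repl_last (R : Type) (n : nat) (Y : 'M[R]_n) (y : 'cV[R]_n) : 'M[R]_n :=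
  \matrix_(i, j) (if (j : nat) == n.-1 then y i ord0 else Y i j).

Definition ones (R : ringType) (n : nat) : 'cV[R]_n := const_mx 1.

From HB Require Import structures.
From mathcomp Require Import all_boot all_order all_algebra.
From mathcomp Require Import all_classical all_reals all_analysis.
From mathcomp Require Import ring lra.
Import Order.TTheory GRing.Theory Num.Theory.
Import numFieldNormedType.Exports.
Set Implicit Arguments. Unset Strict Implicit. Unset Printing Implicit Defensive.
Local Open Scope classical_set_scope.
Local Open Scope ring_scope.

(* The walk matrix [P = I - C L] is stochastic, has a positive diagonal and is
   positive on the edges of the connected graph, so some power [P^K] has all
   entries at least some [d > 0]; and [pi] is a stationary distribution, since
   [pi^T C] is proportional to [1^T] and [1^T L = (L 1)^T = 0] by symmetry.
   Doeblin's contraction then gives [P^t --> 1 pi^T]; in particular the fixed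
   vectors of [P] are constant, which forces [(I - P | 1)] to have a trivial
   kernel.  Finally [S_t (I - P | 1) = (I - P^t | 0)] exactly, so
   [S_t = (I - P^t | 0) (I - P | 1)^-1 --> (I - 1 pi^T | 0) (I - P | 1)^-1]. *)

Section Stochastic.
Variables (R : realFieldType) (n : nat).
Implicit Types (M N : 'M[R]_n) (x : 'cV[R]_n).

Definition nonneg_mx M := forall i j, 0 <= M i j.
Definition stochastic M := nonneg_mx M /\ M *m ones R n = ones R n.

Lemma mulmx_ones_entry M i : (M *m ones R n) i 0 = \sum_j M i j.
Proof. by rewrite mxE; apply: eq_bigr => j _; rewrite mxE mulr1. Qed.

Lemma stochastic_row_sum M i : stochastic M -> \sum_j M i j = 1.
Proof. by case=> _ M1; rewrite -mulmx_ones_entry M1 mxE. Qed.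

Lemma stochasticM M N : stochastic M -> stochastic N -> stochastic (M *m N).
Proof.
case=> M0 M1 [N0 N1]; split; last by rewrite -mulmxA N1 M1.
by move=> i j; rewrite mxE; apply: sumr_ge0 => k _; apply: mulr_ge0.
Qed.

Lemma stochasticX M k : stochastic M -> stochastic (M ^+ k).
Proof.
move=> sM; elim: k => [|k IHk]; last by rewrite exprS -mulmxE; apply: stochasticM.
by rewrite expr0; split=> [i j|]; rewrite ?mul1mx // mxE ler0n.
Qed.

Lemma mulmx_ge_term M N i k j : nonneg_mx M -> nonneg_mx N ->
  M i k * N k j <= (M *m N) i j.
Proof.
move=> M0 N0; rewrite mxE (bigD1 k) //= lerDl.
by apply: sumr_ge0 => l _; apply: mulr_ge0.
Qed.

Lemma doeblin_coef_ge0 M d : (0 < n)%N -> stochastic M ->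
  (forall i j, d <= M i j) -> 0 <= 1 - n%:R * d.
Proof.
move=> n_gt0 sM Md.
have -> : n%:R * d = \sum_(j < n) d by rewrite sumr_const card_ord mulr_natl.
rewrite subr_ge0 -(stochastic_row_sum (Ordinal n_gt0) sM).
by apply: ler_sum => j _.
Qed.

(* Doeblin's argument: since every row puts mass at least [d] on every column,
   [(M x)_i] lies between [a + d sum_k (x_k - a)] and [b - d sum_k (b - x_k)],
   and these two bounds are [n d (b - a)] closer than [a] and [b]. *)
Lemma doeblin_step M d a b x : stochastic M -> 0 <= d ->
  (forall i j, d <= M i j) -> (forall k, a <= x k 0 <= b) ->
  exists a' b', (forall i, a' <= (M *m x) i 0 <= b') /\
                b' - a' = (1 - n%:R * d) * (b - a).
Proof.
move=> sM d0 Md xab.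
exists (a + d * \sum_k (x k 0 - a)), (b - d * \sum_k (b - x k 0)); split.
  move=> i; have M1 := stochastic_row_sum i sM; rewrite mxE; apply/andP; split.
    have -> : a + d * \sum_k (x k 0 - a) = \sum_k (M i k * a + d * (x k 0 - a)).
      by rewrite [RHS]big_split /= -mulr_suml M1 mul1r mulr_sumr.
    apply: ler_sum => k _; have /andP[xa xb] := xab k; have := Md i k.
    by rewrite -subr_ge0 => Mid; nra.
  have -> : b - d * \sum_k (b - x k 0) = \sum_k (M i k * b - d * (b - x k 0)).
    by rewrite [RHS]sumrB -mulr_suml M1 mul1r mulr_sumr.
  apply: ler_sum => k _; have /andP[xa xb] := xab k; have := Md i k.
  by rewrite -subr_ge0 => Mid; nra.
have -> : b - d * \sum_k (b - x k 0) - (a + d * \sum_k (x k 0 - a))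
   = (b - a) - d * \sum_k ((b - x k 0) + (x k 0 - a)).
  by rewrite [in RHS]big_split /=; ring.
rewrite (eq_bigr (fun=> b - a)) => [|k _]; last by ring.
by rewrite sumr_const card_ord -mulr_natl; ring.
Qed.

Lemma doeblin_iter M K d a b x : stochastic M -> 0 <= d ->
  (forall i j, d <= (M ^+ K) i j) -> 0 <= 1 - n%:R * d ->
  (forall k, a <= x k 0 <= b) ->
  forall q r, exists a' b', (forall i, a' <= (M ^+ (K * q + r) *m x) i 0 <= b') /\
     b' - a' <= (1 - n%:R * d) ^+ q * (b - a).
Proof.
move=> sM d0 MKd rho0 xab; elim=> [|q IHq] r.
  rewrite muln0 add0n; elim: r => [|r [a' [b' [xr xrw]]]].
    by exists a, b; rewrite expr0 mul1r; split=> // i; rewrite mul1mx.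
  have [a2 [b2 [Mxr w2]]] := doeblin_step sM (lexx 0) sM.1 xr.
  exists a2, b2; split=> [i|]; first by rewrite exprS -mulmxE -mulmxA.
  by rewrite w2 mulr0 subr0 mul1r.
have [a' [b' [xq xqw]]] := IHq r.
have [a2 [b2 [MKxq w2]]] := doeblin_step (stochasticX K sM) d0 MKd xq.
exists a2, b2; split=> [i|]; first by rewrite mulnS -addnA exprD -mulmxE -mulmxA.
by rewrite w2 exprS -mulrA; apply: ler_wpM2l.
Qed.

End Stochastic.

Section MatrixConvergence.
Context {R : realFieldType} {T : Type} {F : set_system T} {FF : Filter F}.

Lemma cvg_mxP m n (M : T -> 'M[R]_(m, n)) (L : 'M[R]_(m, n)) :
  M @ F --> L <-> forall i j, M x i j @[x --> F] --> L i j.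
Proof.
split=> [ML i j | ML].
  exact: (cvg_comp _ _ ML (@coord_continuous R m n i j L)).
apply/cvgrPdist_le => e e_gt0; near=> x.
rewrite [leLHS]/Num.Def.normr /= mx_normrE (bigmax_le _ (ltW e_gt0)) //= => ij _.
rewrite !mxE /=; move: ij; near: x; apply: filter_forall => ij.
exact: (cvgrPdist_le _ _).1 (ML ij.1 ij.2) e e_gt0.
Unshelve. all: by end_near. Qed.

Lemma cvg_mulmxr m n p (M : T -> 'M[R]_(m, n)) (L : 'M[R]_(m, n))
    (B : 'M[R]_(n, p)) :
  M @ F --> L -> M x *m B @[x --> F] --> L *m B.
Proof.
move/cvg_mxP => ML; apply/cvg_mxP => i j; rewrite mxE.
under eq_cvg do rewrite mxE.
by apply: cvg_big => [|k _]; [exact: add_continuous | exact: cvgMr_tmp].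
Qed.

Lemma cvg_repl_last n (M : T -> 'M[R]_n) (L : 'M[R]_n) y :
  M @ F --> L -> repl_last (M x) y @[x --> F] --> repl_last L y.
Proof.
move/cvg_mxP => ML; apply/cvg_mxP => i j; rewrite mxE.
under eq_cvg do rewrite mxE.
by case: ifP => _; [exact: cvg_cst | exact: ML].
Qed.

End MatrixConvergence.

Lemma cvg_dominated (R : realFieldType) (u v : nat -> R) l :
  (forall t, `|l - u t| <= v t) -> v @ \oo --> 0 -> u @ \oo --> l.
Proof.
move=> uv /cvgrPdist_le v0; apply/cvgrPdist_le => e /v0.
by apply: filterS => t; rewrite sub0r normrN; apply/le_trans/(le_trans (uv t))/ler_norm.
Qed.

Lemma cvg_expr_divn (R : realType) (z : R) K : `|z| < 1 -> (0 < K)%N ->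
  z ^+ (t %/ K) @[t --> \oo] --> 0.
Proof.
move=> z_lt1 K_gt0; apply/cvgrPdist_le => e e_gt0.
have [N _ zN] := (cvgrPdist_le _ _).1 (cvg_expr z_lt1) e e_gt0.
by exists (N * K)%N => // t /= tNK; apply: zN; rewrite /= leq_divRL.
Qed.

Lemma convex_comb_range (R : realFieldType) n (p y : 'cV[R]_n) a b :
  (forall k, 0 <= p k 0) -> \sum_k p k 0 = 1 ->
  (forall k, a <= y k 0 <= b) -> a <= (p^T *m y) 0 0 <= b.
Proof.
move=> p_ge0 p_sum1 yab; rewrite mxE; apply/andP; split.
  rewrite -[a]mul1r -p_sum1 mulr_suml; apply: ler_sum => k _; rewrite mxE.
  by have := p_ge0 k; case/andP: (yab k) => ya yb pk; nra.
rewrite -[b]mul1r -p_sum1 mulr_suml; apply: ler_sum => k _; rewrite mxE.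
by have := p_ge0 k; case/andP: (yab k) => ya yb pk; nra.
Qed.

Section Ergodic.
Variables (R : realType) (n : nat) (P : 'M[R]_n) (p : 'cV[R]_n) (K : nat) (d : R).
Hypotheses (n_gt0 : (0 < n)%N) (sP : stochastic P).
Hypotheses (p_ge0 : forall k, 0 <= p k 0) (p_sum1 : \sum_k p k 0 = 1).
Hypothesis pP : p^T *m P = p^T.
Hypotheses (K_gt0 : (0 < K)%N) (d_gt0 : 0 < d) (PKd : forall i j, d <= (P ^+ K) i j).

Lemma stationary_pow k : p^T *m P ^+ k = p^T.
Proof.
elim: k => [|k IHk]; first by rewrite expr0 mulmx1.
by rewrite exprSr -mulmxE mulmxA IHk pP.
Qed.

(* [p^T x] is a convex combination of the entries of [P^t x], so it lies in
   their range, whose width decays geometrically. *)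
Lemma doeblin_bound (x : 'cV[R]_n) a b : (forall k, a <= x k 0 <= b) -> forall t i,
  `|(p^T *m x) 0 0 - (P ^+ t *m x) i 0| <= (1 - n%:R * d) ^+ (t %/ K) * (b - a).
Proof.
move=> xab t i.
have rho_ge0 := doeblin_coef_ge0 n_gt0 (stochasticX K sP) PKd.
have [a' [b' [range width]]] :=
  doeblin_iter sP (ltW d_gt0) PKd rho_ge0 xab (t %/ K) (t %% K).
rewrite mulnC -divn_eq in range width.
have := convex_comb_range p_ge0 p_sum1 range.
rewrite mulmxA stationary_pow => /andP[pa pb].
have /andP[xa xb] := range i.
by apply: le_trans width; rewrite ler_norml; apply/andP; split; lra.
Qed.

Lemma cvg_stochastic_pow : P ^+ t @[t --> \oo] --> ones R n *m p^T.
Proof.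
apply/cvg_mxP => i k.
apply: (cvg_dominated _ (@cvg_expr_divn _ (1 - n%:R * d) K _ K_gt0)) => [t|].
  have unit_range l : 0 <= (delta_mx k 0 : 'cV[R]_n) l 0 <= 1.
    by rewrite mxE; case: (l == k); rewrite ?ler01 ?lexx.
  have := doeblin_bound unit_range t i.
  by rewrite -!colE !mxE big_ord1 !mxE mul1r subr0 mulr1.
have rho_ge0 := doeblin_coef_ge0 n_gt0 (stochasticX K sP) PKd.
have nd_gt0 : 0 < n%:R * d by rewrite mulr_gt0 // ltr0n.
by rewrite ger0_norm //; lra.
Qed.

Lemma stochastic_fixed_const (x : 'cV[R]_n) :
  P *m x = x -> x = ones R n *m (p^T *m x).
Proof.
move=> Px; have Ptx : (fun t => P ^+ t *m x) = fun=> x.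
  apply/funext; elim=> [|t IHt]; first by rewrite expr0 mul1mx.
  by rewrite exprSr -mulmxE -mulmxA Px.
have : P ^+ t *m x @[t --> \oo] --> ones R n *m p^T *m x.
  exact: cvg_mulmxr cvg_stochastic_pow.
by rewrite Ptx mulmxA => /(cvg_lim (@norm_hausdorff _ _)) <-; rewrite lim_cst.
Qed.

End Ergodic.

Lemma unitmx_ker0 (F : fieldType) n (A : 'M[F]_n) :
  (forall x : 'cV[F]_n, A *m x = 0 -> x = 0) -> A \in unitmx.
Proof.
move=> kerA; rewrite -row_full_unit -cokermx_eq0; apply/eqP/matrixP => i j.
have := kerA (col j (cokermx A)).
rewrite colE mulmxA mulmx_coker mul0mx => /(_ erefl)/matrixP/(_ i 0).
by rewrite -colE !mxE.
Qed.

Lemma mulmx_repl_last_entry (R : pzRingType) m n (Y : 'M[R]_(m, n)) Z y i j :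
  (Y *m repl_last Z y) i j = if (j : nat) == n.-1 then (Y *m y) i 0 else (Y *m Z) i j.
Proof.
by rewrite mxE; case: ifP => jn; rewrite mxE; apply: eq_bigr => k _; rewrite mxE jn.
Qed.

Lemma mulmx_repl_last (R : pzRingType) n (Y Z : 'M[R]_n) y :
  Y *m repl_last Z y = repl_last (Y *m Z) (Y *m y).
Proof. by apply/matrixP => i j; rewrite mulmx_repl_last_entry [RHS]mxE. Qed.

Lemma repl_last_mulmx (R : pzRingType) n (Y : 'M[R]_n) y (x : 'cV[R]_n) :
  (forall j : 'I_n, (j : nat) = n.-1 -> x j 0 = 0) -> repl_last Y y *m x = Y *m x.
Proof.
move=> x_last0; apply/matrixP => i k; rewrite (ord1 k) !mxE; apply: eq_bigr => j _.
by rewrite mxE; case: eqP => // /x_last0 ->; rewrite !mulr0.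
Qed.

(* Applying [p^T] to [(I - P | 1) x = 0] kills the [I - P] part and leaves the
   last coordinate of [x], so [(I - P) x = 0] and [x] is constant, hence 0. *)
Lemma unitmx_repl_last (F : fieldType) n (P : 'M[F]_n) (p : 'cV[F]_n) :
  (0 < n)%N -> p^T *m P = p^T -> p^T *m ones F n = 1 ->
  (forall x : 'cV[F]_n, P *m x = x -> x = ones F n *m (p^T *m x)) ->
  repl_last (1%:M - P) (ones F n) \in unitmx.
Proof.
move=> n_gt0 pP p1 P_fixed; apply: unitmx_ker0 => x Ax.
have last_lt : (n.-1 < n)%N by rewrite prednK.
pose last := Ordinal last_lt.
have pI_P : p^T *m (1%:M - P) = 0 by rewrite mulmxBr mulmx1 pP subrr.
have x_last0 : x last 0 = 0.
  have pAx : (p^T *m repl_last (1%:M - P) (ones F n) *m x) 0 0 = 0.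
    by rewrite -mulmxA Ax mulmx0 mxE.
  rewrite mxE (bigD1 last) //= big1 ?addr0 in pAx => [|j j_last].
    by rewrite mulmx_repl_last_entry eqxx p1 mxE mul1r in pAx.
  rewrite mulmx_repl_last_entry pI_P ifF ?mxE ?mul0r //.
  by apply: contraNF j_last => /eqP j_eq; apply/eqP/val_inj.
have x_fixed : P *m x = x.
  apply/esym/eqP; rewrite -subr_eq0 -{1}[x]mul1mx -mulmxBl -Ax eq_sym.
  rewrite repl_last_mulmx // => j j_eq.
  by rewrite -x_last0; congr (x _ 0); apply: val_inj.
have /matrixP x_const := P_fixed x x_fixed.
have px0 : (p^T *m x) 0 0 = 0 by rewrite -x_last0 x_const !mxE big_ord1 !mxE mul1r.
by apply/matrixP => i k; rewrite (ord1 k) x_const !mxE big_ord1 px0 mulr0.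
Qed.

Lemma sum_exprmx_telescope (R : pzRingType) n (M : 'M[R]_n) t :
  (\sum_(s < t) M ^+ s) *m (1%:M - M) = 1%:M - M ^+ t.
Proof.
elim: t => [|t IHt]; first by rewrite big_ord0 mul0mx expr0 subrr.
by rewrite big_ord_recr /= mulmxDl IHt mulmxBr mulmx1 mulmxE -exprSr addrA subrK.
Qed.

(* The powers telescope against [I - P], and the last column vanishes because
   [P^s 1 = 1] and [p^T 1 = 1]. *)
Lemma deviation_sum_mul_repl_last (R : comNzRingType) n (P : 'M[R]_n) p t :
  P *m ones R n = ones R n -> p^T *m P = p^T -> p^T *m ones R n = 1 ->
  (- (t%:R *: (ones R n *m p^T)) + \sum_(s < t) P ^+ s)
    *m repl_last (1%:M - P) (ones R n) = repl_last (1%:M - P ^+ t) 0.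
Proof.
move=> P1 pP p1; rewrite mulmx_repl_last !mulmxDl !mulNmx -!scalemxAl -!mulmxA.
rewrite sum_exprmx_telescope mulmxBr mulmx1 pP subrr mulmx0 scaler0 oppr0 add0r.
rewrite p1 mulmx1 mulmx_suml (eq_bigr (fun=> ones R n)) => [|s _].
  by rewrite sumr_const card_ord scaler_nat addNr.
elim: (s : nat) => [|k IHk]; first by rewrite expr0 mul1mx.
by rewrite exprS -mulmxE -mulmxA IHk P1.
Qed.

Lemma stochastic_pow_diag_gt0 (R : realFieldType) n (M : 'M[R]_n) :
  stochastic M -> (forall i, 0 < M i i) -> forall k i, 0 < (M ^+ k) i i.
Proof.
move=> sM M_diag; elim=> [|k IHk] i; first by rewrite expr0 mxE eqxx.
rewrite exprS -mulmxE.
apply: lt_le_trans (mulmx_ge_term i i i sM.1 (stochasticX k sM).1).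
exact: mulr_gt0.
Qed.

(* Positive diagonal entries let a walk along a path of [e] wait at its end,
   so every power beyond the path length is positive. *)
Lemma stochastic_pow_connect_gt0 (R : realFieldType) n (e : rel 'I_n) (M : 'M[R]_n) :
  stochastic M -> (forall i, 0 < M i i) -> (forall i j, e i j -> 0 < M i j) ->
  forall i j, connect e i j -> exists m, forall k, (m <= k)%N -> 0 < (M ^+ k) i j.
Proof.
move=> sM M_diag M_edge i j /connectP [q q_path ->] {j}.
elim: q i q_path => [|y q IHq] i /=.
  by move=> _; exists 0%N => k _; apply: stochastic_pow_diag_gt0.
case/andP => e_iy q_path; have [m Mm] := IHq y q_path.
exists m.+1 => -[//|k] k_ge; rewrite exprS -mulmxE.
apply: lt_le_trans (mulmx_ge_term i y (last y q) sM.1 (stochasticX k sM).1).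
by apply: mulr_gt0; [apply: M_edge | apply: Mm].
Qed.

Lemma stochastic_primitive (R : realFieldType) n (e : rel 'I_n) (M : 'M[R]_n) :
  stochastic M -> (forall i, 0 < M i i) -> (forall i j, e i j -> 0 < M i j) ->
  (forall i j, connect e i j) ->
  exists K d, [/\ (0 < K)%N, 0 < d & forall i j, d <= (M ^+ K) i j].
Proof.
move=> sM M_diag M_edge e_conn.
have [m Mm] := choice (fun ij : 'I_n * 'I_n =>
  stochastic_pow_connect_gt0 sM M_diag M_edge (e_conn ij.1 ij.2)).
pose K := (\max_ij m ij).+1; have MK_gt0 i j : 0 < (M ^+ K) i j.
  by apply: (Mm (i, j)); apply/leqW/(leq_bigmax (i, j)).
exists K, (\big[Order.min/1]_(ij : 'I_n * 'I_n) (M ^+ K) ij.1 ij.2); split=> //.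
  by apply: lt_bigmin => // ij _; apply: MK_gt0.
by move=> i j; exact: (bigmin_le _ (i, j)).
Qed.

Lemma laplacian_mulmx_ones (R : nzRingType) n (e : rel 'I_n) :
  laplacian R e *m ones R n = 0.
Proof.
apply/matrixP => i k; rewrite !mxE.
under eq_bigr do rewrite !mxE mulr1.
rewrite sumrB (bigD1 i) //= eqxx mulr1n big1 => [|j /negbTE]; last first.
  by rewrite eq_sym => ->.
rewrite addr0 /deg -sum1_card big_mkcond /= natr_sum.
by rewrite (eq_bigr (fun j => (e i j)%:R)) ?subrr // => j _; rewrite inE; case: (e i j).
Qed.

Lemma laplacian_tr (R : nzRingType) n (e : rel 'I_n) :
  symmetric e -> (laplacian R e)^T = laplacian R e.
Proof.
move=> e_sym; apply/matrixP => i j; rewrite !mxE e_sym.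
by case: eqVneq => [->|ij]; rewrite ?eqxx // eq_sym (negbTE ij).
Qed.

Section RandomWalk.
Variables (R : realFieldType) (n : nat) (e : rel 'I_n) (c : 'I_n -> rat).
Hypotheses (e_simple : simple_graph e) (c_gt0 : forall i, 0 < c i).
Hypothesis c_deg_lt1 : forall i, c i * (deg e i)%:R < 1.

Definition walk_mx : 'M[R]_n := 1%:M - diag_mx (\row_i ratr (c i)) *m laplacian R e.

Definition walk_stationary : 'cV[R]_n :=
  (\tr (diag_mx (\row_i (ratr (c i))^-1)))^-1 *: \col_i (ratr (c i))^-1.

Lemma walk_mx_diag i : walk_mx i i = 1 - ratr (c i) * (deg e i)%:R.
Proof. by rewrite /walk_mx mul_diag_mx !mxE eqxx e_simple.2 !mulr1n subr0. Qed.

Lemma walk_mx_offdiag i j : i != j -> walk_mx i j = ratr (c i) * (e i j)%:R.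
Proof.
move=> /negbTE ij.
by rewrite /walk_mx mul_diag_mx !mxE ij !mulr0n !sub0r mulrN opprK.
Qed.

Lemma walk_mx_diag_gt0 i : 0 < walk_mx i i.
Proof.
have := c_deg_lt1 i; rewrite -(ltr_rat R) rmorphM /= ratr_nat rmorph1.
by rewrite walk_mx_diag subr_gt0.
Qed.

Lemma walk_mx_edge_gt0 i j : e i j -> 0 < walk_mx i j.
Proof.
move=> e_ij; have ij : i != j by apply: contraTneq e_ij => ->; rewrite e_simple.2.
by rewrite walk_mx_offdiag // e_ij mulr1 ltr0q.
Qed.

Lemma walk_stochastic : stochastic walk_mx.
Proof.
split; last by rewrite mulmxBl mul1mx -mulmxA laplacian_mulmx_ones mulmx0 subr0.
move=> i j; have [<-|ij] := eqVneq i j; first exact/ltW/walk_mx_diag_gt0.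
by rewrite walk_mx_offdiag // mulr_ge0 ?ler0n // ler0q ltW.
Qed.

Lemma walk_stationary_ge0 k : 0 <= walk_stationary k 0.
Proof.
have c_inv_ge0 j : 0 <= (ratr (c j))^-1 :> R by rewrite invr_ge0 ler0q ltW.
rewrite !mxE mulr_ge0 // invr_ge0 mxtrace_diag.
by apply: sumr_ge0 => j _; rewrite mxE.
Qed.

Lemma walk_stationary_sum1 : (0 < n)%N -> \sum_k walk_stationary k 0 = 1.
Proof.
move=> n_gt0; under eq_bigr do rewrite !mxE.
rewrite -mulr_sumr mxtrace_diag (eq_bigr (fun j => (ratr (c j))^-1)) => [|j _].
  2: by rewrite mxE.
rewrite mulVf // gt_eqF // (bigD1 (Ordinal n_gt0)) //= ltr_pwDl ?invr_gt0 ?ltr0q //.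
by apply: sumr_ge0 => j _; rewrite invr_ge0 ler0q ltW.
Qed.

Lemma walk_stationary_ones : (0 < n)%N -> walk_stationary^T *m ones R n = 1.
Proof.
move=> n_gt0; apply/matrixP => i j; rewrite !ord1 !mxE -(walk_stationary_sum1 n_gt0).
by apply: eq_bigr => k _; rewrite !mxE mulr1.
Qed.

Lemma walk_stationary_fixed : walk_stationary^T *m walk_mx = walk_stationary^T.
Proof.
rewrite mulmxBr mulmx1 mulmxA.
have -> : walk_stationary^T *m diag_mx (\row_i ratr (c i))
    = (\tr (diag_mx (\row_i (ratr (c i))^-1)))^-1 *: (ones R n)^T.
  apply/matrixP => i j; rewrite mul_mx_diag !mxE -mulrA mulVf ?gt_eqF ?ltr0q //.
rewrite -scalemxAl -[laplacian R e](laplacian_tr R e_simple.1) -trmx_mul.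
by rewrite laplacian_mulmx_ones trmx0 scaler0 subr0.
Qed.

End RandomWalk.

Theorem lemma3p10 (R : realType) (n : nat) (e : rel 'I_n) (c : 'I_n -> rat) :
  (0 < n)%N ->
  simple_graph e -> graph_connected e ->
  (forall i, 0 < c i) ->
  (forall i, c i * (deg e i)%:R < 1) ->
  let C : 'M[R]_n := diag_mx (\row_i ratr (c i)) in
  let L : 'M[R]_n := laplacian R e in
  let P : 'M[R]_n := 1%:M - C *m L in
  let pi : 'cV[R]_n :=
    (\tr (diag_mx (\row_i (ratr (c i))^-1)))^-1 *: \col_i (ratr (c i))^-1 in
  let one : 'cV[R]_n := ones R n in
  let S : nat -> 'M[R]_n := fun t =>
    - (t%:R *: (one *m pi^T)) + \sum_(s < t) P ^+ s in
  repl_last (1%:M - P) one \in unitmx /\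
  S @ \oo --> repl_last (1%:M - one *m pi^T) 0 *m invmx (repl_last (1%:M - P) one).
Proof.
move=> n_gt0 e_simple e_conn c_gt0 c_deg_lt1 C L P pi one S.
have sP : stochastic P := walk_stochastic R e_simple c_gt0 c_deg_lt1.
have piP : pi^T *m P = pi^T := walk_stationary_fixed R e_simple c_gt0.
have pi1 : pi^T *m one = 1 := walk_stationary_ones R c_gt0 n_gt0.
have [K [d [K_gt0 d_gt0 PKd]]] := stochastic_primitive sP
  (walk_mx_diag_gt0 R e_simple c_deg_lt1) (walk_mx_edge_gt0 R e_simple c_gt0) e_conn.
have pi_ge0 := walk_stationary_ge0 R c_gt0.
have pi_sum1 := walk_stationary_sum1 R c_gt0 n_gt0.
have A_unit : repl_last (1%:M - P) one \in unitmx.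
  exact: unitmx_repl_last n_gt0 piP pi1
    (stochastic_fixed_const n_gt0 sP pi_ge0 pi_sum1 piP K_gt0 d_gt0 PKd).
split=> //.
have -> : S = fun t => repl_last (1%:M - P ^+ t) 0 *m invmx (repl_last (1%:M - P) one).
  by apply/funext => t; rewrite -(deviation_sum_mul_repl_last t sP.2 piP pi1) mulmxK.
apply: cvg_mulmxr; apply: cvg_repl_last; apply: cvgB; first exact: cvg_cst.
exact: cvg_stochastic_pow n_gt0 sP pi_ge0 pi_sum1 piP K_gt0 d_gt0 PKd.
Qed.
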